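(* Let $g$ be the pp-wave metric $ds^2=H(u,x^1,x^2)\,du^2+2\,du\,dv+(dx^1)^2+(dx^2)^2$, $0<b<1$, $m>0$, and consider the Finslerian pp-wave geodesic Lagrangian $$L=-\frac{1}{2n}\,\dot u^{2b}\left(-H\dot u^2-2\dot u\dot v-\delta_{ij}\dot x^i\dot x^j\right)^{1-b}-\frac{m^2}{2}n .$$ Along any solution of its Euler–Lagrange equations with $\dot u>0$ and $\mathcal G:=-H\dot u^2-2\dot u\dot v-\delta_{ij}\dot x^i\dot x^j>0$, the momentum $p_v=\partial L/\partial\dot v=(1-b)\dot u^{1+2b}\mathcal G^{-b}/n$ is constant, equal to some $\pi_v>0$, and $\mathcal G/\dot u^2$ equals the constant $$M_b^2=\left[\frac{(1-b)^2m^2}{\pi_v^2}\right]^{\frac{1}{1+b}} .$$ Moreover, if $\Upsilon$ is any vector field satisfying $\mathcal L_\Upsilon\left(g_{\mu\nu}-\frac{b}{1-b}M_b^2K_{\mu\nu}\right)=2\Omega(\mathrm x)\left(g_{\mu\nu}+M_b^2K_{\mu\nu}\right)$ with $K=du\otimes du$ and this value of $M_b^2$, then $I=\Upsilon^\mu\,\partial L/\partial\dot{\mathrm x}^\mu$ is constant along such a solution.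
   Context: Coordinates $(u,v,x^1,x^2)$, $i,j=1,2$, dots denote $d/d\lambda$, and $n(\lambda)>0$ is the einbein, varied independently (its Euler–Lagrange equation gives $n=\frac{1}{m}\dot u^{b}\mathcal G^{(1-b)/2}$). Here $\mathcal K=K_{\mu\nu}\dot{\mathrm x}^\mu\dot{\mathrm x}^\nu=\dot u^2$, so $M_b^{-2}=\mathcal K/\mathcal G$. *)

(* R : realType, points of spacetime are row vectors 'rV[R]_4
   with coordinates ordered (u, v, x^1, x^2) = indices 0,1,2,3. *)
From HB Require Import structures.
From mathcomp Require Import all_boot all_order all_algebra.
From mathcomp Require Import all_classical all_reals all_analysis.
Set Implicit Arguments. Unset Strict Implicit. Unset Printing Implicit Defensive.
Import Order.TTheory GRing.Theory Num.Theory.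
Import numFieldNormedType.Exports.
Local Open Scope classical_set_scope.
Local Open Scope ring_scope.

Definition iu : 'I_4 := @Ordinal 4 0 isT.
Definition iv : 'I_4 := @Ordinal 4 1 isT.
Definition i1 : 'I_4 := @Ordinal 4 2 isT.
Definition i2 : 'I_4 := @Ordinal 4 3 isT.

Definition ebasis {R : realType} (mu : 'I_4) : 'rV[R]_4 := delta_mx 0 mu.

Definition pd {R : realType} (f : 'rV[R]_4 -> R) (mu : 'I_4) (p : 'rV[R]_4) : R :=
  'D_(ebasis mu) f p.

Definition ppmetric {R : realType} (H : R -> R -> R -> R) (p : 'rV[R]_4) : 'M[R]_4 :=
  \matrix_(i, j)
    (if (i == iu) && (j == iu) then H (p ord0 iu) (p ord0 i1) (p ord0 i2)
     else if ((i == iu) && (j == iv)) || ((i == iv) && (j == iu)) then 1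
     else if ((i == i1) && (j == i1)) || ((i == i2) && (j == i2)) then 1
     else 0).

Definition Kmat {R : realType} : 'M[R]_4 :=
  \matrix_(i, j) (if (i == iu) && (j == iu) then 1 else 0).

Definition calG {R : realType} (H : R -> R -> R -> R) (p qd : 'rV[R]_4) : R :=
  - \sum_(i < 4) \sum_(j < 4) ppmetric H p i j * qd ord0 i * qd ord0 j.

Definition Lagr {R : realType} (b m : R) (H : R -> R -> R -> R) (p qd : 'rV[R]_4) (nn : R) : R :=
  - (1 / (2 * nn)) * (qd ord0 iu `^ (2 * b)) * (calG H p qd `^ (1 - b))
  - (m ^+ 2 / 2) * nn.

Definition pmom {R : realType} (b m : R) (H : R -> R -> R -> R) (mu : 'I_4)
  (p qd : 'rV[R]_4) (nn : R) : R :=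
  'D_(ebasis mu) (fun w => Lagr b m H p w nn) qd.

Definition force {R : realType} (b m : R) (H : R -> R -> R -> R) (mu : 'I_4)
  (p qd : 'rV[R]_4) (nn : R) : R :=
  'D_(ebasis mu) (fun y => Lagr b m H y qd nn) p.

Definition dLdn {R : realType} (b m : R) (H : R -> R -> R -> R) (p qd : 'rV[R]_4) (nn : R) : R :=
  derive1 (fun t : R => Lagr b m H p qd t) nn.

Definition EL_solution {R : realType} (b m : R) (H : R -> R -> R -> R) (I : set R)
  (x : R -> 'rV[R]_4) (n : R -> R) : Prop :=
  (forall l, I l -> derivable x l 1) /\
  (forall l, I l -> forall mu : 'I_4,
     is_derive l (1 : R) (fun s => pmom b m H mu (x s) (derive1 x s) (n s))
               (force b m H mu (x l) (derive1 x l) (n l))) /\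
  (forall l, I l -> dLdn b m H (x l) (derive1 x l) (n l) = 0).

Definition lieD {R : realType} (Y : 'rV[R]_4 -> 'rV[R]_4) (T : 'rV[R]_4 -> 'M[R]_4)
  (p : 'rV[R]_4) (i j : 'I_4) : R :=
  \sum_(k < 4) ( Y p ord0 k * pd (fun q => T q i j) k p
               + T p k j * pd (fun q => Y q ord0 k) i p
               + T p i k * pd (fun q => Y q ord0 k) j p).

Definition Mb2 {R : realType} (b m piv : R) : R :=
  ((1 - b) ^+ 2 * m ^+ 2 / piv ^+ 2) `^ (1 / (1 + b)).

From HB Require Import structures.
From mathcomp Require Import all_boot all_order all_algebra.
From mathcomp Require Import all_classical all_reals all_analysis.
From mathcomp Require Import ring lra.
Import Order.TTheory GRing.Theory Num.Theory.
Import numFieldNormedType.Exports.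
Local Open Scope classical_set_scope.
Local Open Scope ring_scope.

(* The Lagrangian depends on the velocity through [udot] and [G] only, and on the position
   only through [H(u, x1, x2)]; hence [dL/dv = 0] and [p_v] is conserved.  Writing
   [K = (1-b) udot^(2b) G^(-b) / n], the momenta are [p_mu = K ((g - c du(x)du) xdot)_mu]
   with [c = b/(1-b) G/udot^2], and [dL/dx^mu = K/2 xdot^T (d_mu g) xdot].  The einbein
   equation [m^2 n^2 = udot^(2b) G^(1-b)] together with [p_v = K udot] gives
   [G/udot^2 = M_b^2], so [c = b/(1-b) M_b^2] is constant along the solution.  Then
   [d/dlambda (Y^mu p_mu) = K/2 xdot^T (L_Y (g - c K)) xdot = K Om (M_b^2 udot^2 - G) = 0]. *)

Section RealCalculus.
Context {R : realType}.
Implicit Types (f g : R -> R) (x : R).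

Lemma is_derive0_interval_cst f {I : set R} :
  is_interval I -> (forall l, I l -> is_derive l (1 : R) f 0) ->
  forall s t, I s -> I t -> f s = f t.
Proof.
move=> iI f'0 s t Is It.
wlog st : s t Is It / s <= t.
  by move=> sym; case: (leP s t) => [/sym|/ltW /sym ->] //; apply.
have sub z : z \in `[s, t] -> I z by rewrite in_itv /= => zst; apply: (iI s t).
have cf : {within `[s, t], continuous f}.
  by apply: derivable_within_continuous => z /sub /f'0 [].
have [c _ E] := MVT_segment (df := fun _ => 0) st
  (fun z zin => f'0 z (sub z (subset_itv_oo_cc zin))) cf.
by apply/eqP; rewrite eq_sym -subr_eq0 E mul0r.
Qed.

Lemma is_derive_lineP {V : normedModType R} (f : V -> R) (p v : V) (d : R) :
  is_derive p v f d <-> is_derive (0 : R) (1 : R) (fun t : R => f (t *: v + p)) d.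
Proof.
have DE : 'D_1 (fun t : R => f (t *: v + p)) 0 = 'D_v f p.
  rewrite /derive; do 2 f_equal; apply/funext => h /=.
  by rewrite addr0 scale0r add0r [_%:A]mulr1.
split=> -[D <-]; split; rewrite ?DE //.
- by move/derivable1P: D.
- exact/derivable1P.
Qed.

(* Pointwise forms of the library rules, whose statements use function arithmetic. *)
Lemma is_derive1_add {f g x df dg} : is_derive x (1 : R) f df -> is_derive x 1 g dg ->
  is_derive x 1 (fun t => f t + g t) (df + dg).
Proof. by move=> F G; have := is_deriveD F G. Qed.

Lemma is_derive1_sub {f g x df dg} : is_derive x (1 : R) f df -> is_derive x 1 g dg ->
  is_derive x 1 (fun t => f t - g t) (df - dg).
Proof. by move=> F G; have := is_deriveB F G. Qed.

Lemma is_derive1_mul {f g x df dg} : is_derive x (1 : R) f df -> is_derive x 1 g dg ->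
  is_derive x 1 (fun t => f t * g t) (f x * dg + g x * df).
Proof. by move=> F G; have := is_deriveM F G. Qed.

Lemma is_derive1_opp {f x df} : is_derive x (1 : R) f df ->
  is_derive x 1 (fun t => - f t) (- df).
Proof. by move=> F; have := is_deriveN F. Qed.

Lemma is_derive1_inv {f x df} : f x != 0 -> is_derive x (1 : R) f df ->
  is_derive x 1 (fun t => (f t)^-1) (- (f x) ^- 2 * df).
Proof. by move=> fx F; have := is_deriveV fx F. Qed.

Lemma is_derive1_sum {n} {h : 'I_n -> R -> R} {x} {dh : 'I_n -> R} :
  (forall i, is_derive x (1 : R) (h i) (dh i)) ->
  is_derive x 1 (fun t => \sum_(i < n) h i t) (\sum_(i < n) dh i).
Proof. by move=> D; rewrite -fct_sumE; apply: is_derive_sum. Qed.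

Lemma is_derive1_comp_powR {f x df} r : 0 < f x -> is_derive x (1 : R) f df ->
  is_derive x 1 (fun t => f t `^ r) (r * f x `^ (r - 1) * df).
Proof. by move=> fx F; have := is_derive1_comp (is_derive1_powR r fx) F. Qed.

Lemma is_derive1_finsler_density {A G : R -> R} {x dA dG} (k b c : R) :
  is_derive x (1 : R) A dA -> is_derive x 1 G dG -> 0 < A x -> 0 < G x ->
  is_derive x 1 (fun t => k * A t `^ (2 * b) * G t `^ (1 - b) - c)
    (k * A x `^ (2 * b) * G x `^ (- b) * ((1 - b) * dG + 2 * b * G x / A x * dA)).
Proof.
move=> dA' dG' A0 G0.
apply: is_derive_eq (is_derive1_sub (is_derive1_mul (is_derive1_mul (is_derive_cst k x (1 : R))
  (is_derive1_comp_powR (2 * b) A0 dA')) (is_derive1_comp_powR (1 - b) G0 dG'))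
  (is_derive_cst c x (1 : R))) _.
have G1b : G x `^ (1 - b) = G x * G x `^ (- b).
  by rewrite powRD ?powRr1 ?ltW //; apply/implyP => _; rewrite gt_eqF.
have A2b : A x `^ (2 * b - 1) = A x `^ (2 * b) / A x.
  by rewrite powRB ?powRr1 ?ltW //; apply/implyP => _; rewrite gt_eqF.
rewrite G1b A2b (_ : 1 - b - 1 = - b) /=; last by ring.
by field; rewrite gt_eqF.
Qed.

Lemma is_derive_line_coord {n} (v q : 'rV[R]_n) (k : 'I_n) x :
  is_derive x (1 : R) (fun s => (s *: v + q) ord0 k) (v ord0 k).
Proof.
have -> : (fun s => (s *: v + q) ord0 k) = (fun s => s * v ord0 k + q ord0 k).
  by apply/funext => s; rewrite !mxE.
by apply: is_derive_eq; rewrite scaler0 add0r addr0 [_%:A]mulr1.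
Qed.
End RealCalculus.

Definition Hfield {R : realType} (H : R -> R -> R -> R) (p : 'rV[R]_4) : R :=
  H (p ord0 iu) (p ord0 i1) (p ord0 i2).

Definition qform {R : realType} (A : 'I_4 -> 'I_4 -> R) (q : 'rV[R]_4) : R :=
  \sum_(i < 4) \sum_(j < 4) A i j * q ord0 i * q ord0 j.

Definition ppshift {R : realType} (H : R -> R -> R -> R) (c : R) (p : 'rV[R]_4) : 'M[R]_4 :=
  ppmetric H p - c *: Kmat.

Definition Mb2_at {R : realType} (H : R -> R -> R -> R) (p q : 'rV[R]_4) : R :=
  calG H p q / q ord0 iu ^+ 2.

Definition momentum_scale {R : realType} (b : R) (H : R -> R -> R -> R) (p q : 'rV[R]_4)
  (nn : R) : R :=
  (1 - b) * q ord0 iu `^ (2 * b) * calG H p q `^ (- b) / nn.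

Section PPWave.
Context {R : realType}.
Variable H : R -> R -> R -> R.

Lemma big_ord4 (F : 'I_4 -> R) : \sum_(i < 4) F i = F iu + F iv + F i1 + F i2.
Proof. by rewrite !big_ord_recr big_ord0 /= add0r; repeat f_equal; apply: val_inj. Qed.

Lemma sum_ebasis (mu : 'I_4) (F : 'I_4 -> R) : \sum_(i < 4) ebasis mu ord0 i * F i = F mu.
Proof.
rewrite (bigD1 mu) //= big1 => [|i /negPf nmu]; last by rewrite mxE nmu andbF mul0r.
by rewrite mxE !eqxx mul1r addr0.
Qed.

Lemma calGE p q : calG H p q =
  - (Hfield H p * q ord0 iu ^+ 2 + 2 * q ord0 iu * q ord0 iv + q ord0 i1 ^+ 2 + q ord0 i2 ^+ 2).
Proof. by rewrite /calG !big_ord4 !mxE /= /Hfield; ring. Qed.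

Lemma ppshift_sym c p i j : ppshift H c p i j = ppshift H c p j i.
Proof. by move: i j => [[|[|[|[|i]]]] ?] [[|[|[|[|j]]]] ?] //; rewrite !mxE. Qed.

Lemma qform_ppmetric_Kmat M p q :
  qform (ppmetric H p + M *: Kmat) q = - calG H p q + M * q ord0 iu ^+ 2.
Proof. by rewrite calGE /qform !big_ord4 !mxE /= /Hfield; ring. Qed.

Lemma pd_Hfield_v p : pd (Hfield H) iv p = 0.
Proof.
rewrite /pd; have [_ ->] // : is_derive p (ebasis iv) (Hfield H) 0.
apply/is_derive_lineP.
have -> : (fun t : R => Hfield H (t *: ebasis iv + p)) = cst (Hfield H p).
  by apply/funext => t; rewrite /Hfield !mxE /= !mulr0 !add0r.
exact: is_derive_cst.
Qed.

Lemma pd_ppshift c i j k p : differentiable (Hfield H) p ->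
  pd (fun z => ppshift H c z i j) k p =
  if (i == iu) && (j == iu) then pd (Hfield H) k p else 0.
Proof.
move=> dH; rewrite /pd; case: ifP => E.
  rewrite (_ : (fun z => _) = (fun z => Hfield H z - c)); last first.
    by apply/funext => z; rewrite !mxE E mulr1.
  have [_ ->] := is_deriveB (derivableP (diff_derivable (v := ebasis k) dH))
    (is_derive_cst c p (ebasis k)).
  by rewrite subr0.
rewrite (_ : (fun z => _) = cst (ppshift H c p i j)) ?derive_cst //.
by apply/funext => z; rewrite !mxE E.
Qed.

Lemma qform_pd_ppshift c k p q : differentiable (Hfield H) p ->
  qform (fun i j => pd (fun z => ppshift H c z i j) k p) q = pd (Hfield H) k p * q ord0 iu ^+ 2.
Proof.
move=> dH; rewrite /qform.
under eq_bigr do under eq_bigr do rewrite pd_ppshift //.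
by rewrite !big_ord4 /=; ring.
Qed.
End PPWave.

Lemma is_derive_qform_line {R : realType} (A : 'I_4 -> 'I_4 -> R) (v q : 'rV[R]_4) x :
  is_derive x (1 : R) (fun s => qform A (s *: v + q))
    (\sum_(i < 4) \sum_(j < 4)
       A i j * (v ord0 i * (x *: v + q) ord0 j + (x *: v + q) ord0 i * v ord0 j)).
Proof.
apply: is_derive_eq (is_derive1_sum (fun i => is_derive1_sum (fun j =>
  is_derive1_mul (is_derive1_mul (is_derive_cst (A i j) x (1 : R))
    (is_derive_line_coord v q i x)) (is_derive_line_coord v q j x)))) _.
by apply: eq_bigr => i _; apply: eq_bigr => j _ /=; ring.
Qed.

Section Lagrangian.
Context {R : realType}.
Variables (H : R -> R -> R -> R) (b m : R).

Lemma is_derive_calG_vel p q v :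
  is_derive q v (calG H p)
    (- 2 * \sum_(i < 4) v ord0 i * \sum_(j < 4) ppmetric H p i j * q ord0 j).
Proof.
apply/is_derive_lineP.
apply: is_derive_eq (is_derive1_opp (is_derive_qform_line (ppmetric H p) v q 0)) _.
by rewrite scale0r add0r !big_ord4 !mxE /=; ring.
Qed.

Lemma is_derive_calG_pos p q v : differentiable (Hfield H) p ->
  is_derive p v (fun y => calG H y q) (- ('D_v (Hfield H) p * q ord0 iu ^+ 2)).
Proof.
move=> dH; apply/is_derive_lineP.
have dHv := (is_derive_lineP _ _ _ _).1 (derivableP (diff_derivable (v := v) dH)).
have -> : (fun t : R => calG H (t *: v + p) q) = (fun t => - (Hfield H (t *: v + p)
    * q ord0 iu ^+ 2 + (2 * q ord0 iu * q ord0 iv + q ord0 i1 ^+ 2 + q ord0 i2 ^+ 2))).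
  by apply/funext => t; rewrite calGE; ring.
apply: is_derive_eq (is_derive1_opp (is_derive1_add (is_derive1_mul dHv
  (is_derive_cst (q ord0 iu ^+ 2) 0 (1 : R))) (is_derive_cst _ 0 (1 : R)))) _.
by rewrite /cst; ring.
Qed.

Lemma is_derive_Lagr_vel (p q v : 'rV[R]_4) (nn : R) :
  b != 1 -> nn != 0 -> 0 < q ord0 iu -> 0 < calG H p q ->
  is_derive q v (fun w => Lagr b m H p w nn)
    (momentum_scale b H p q nn * \sum_(i < 4) v ord0 i
       * \sum_(j < 4) ppshift H (b / (1 - b) * Mb2_at H p q) p i j * q ord0 j).
Proof.
move=> b1 nn0 q0 G0; apply/is_derive_lineP.
have A0 : 0 < (0 *: v + q) ord0 iu by rewrite scale0r add0r.
have G0' : 0 < calG H p (0 *: v + q) by rewrite scale0r add0r.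
apply: is_derive_eq (is_derive1_finsler_density (- (1 / (2 * nn))) b (m ^+ 2 / 2 * nn)
  (is_derive_line_coord v q iu 0)
  ((is_derive_lineP _ _ _ _).1 (is_derive_calG_vel p q v)) A0 G0') _.
rewrite scale0r add0r /momentum_scale /Mb2_at !big_ord4 !mxE /=.
by field; rewrite gt_eqF // subr_eq0 eq_sym b1 nn0.
Qed.

Lemma is_derive_Lagr_pos (p q v : 'rV[R]_4) (nn : R) :
  differentiable (Hfield H) p -> nn != 0 -> 0 < q ord0 iu -> 0 < calG H p q ->
  is_derive p v (fun y => Lagr b m H y q nn)
    (momentum_scale b H p q nn / 2 * ('D_v (Hfield H) p * q ord0 iu ^+ 2)).
Proof.
move=> dH nn0 q0 G0; apply/is_derive_lineP.
have G0' : 0 < calG H (0 *: v + p) q by rewrite scale0r add0r.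
apply: is_derive_eq (is_derive1_finsler_density (- (1 / (2 * nn))) b (m ^+ 2 / 2 * nn)
  (is_derive_cst (q ord0 iu) 0 (1 : R))
  ((is_derive_lineP _ _ _ _).1 (is_derive_calG_pos p q v dH)) q0 G0') _.
rewrite scale0r add0r /momentum_scale /cst.
by field; rewrite nn0 gt_eqF.
Qed.

Lemma pmomE (mu : 'I_4) (p q : 'rV[R]_4) (nn : R) :
  b != 1 -> nn != 0 -> 0 < q ord0 iu -> 0 < calG H p q ->
  pmom b m H mu p q nn = momentum_scale b H p q nn
    * \sum_(j < 4) ppshift H (b / (1 - b) * Mb2_at H p q) p mu j * q ord0 j.
Proof.
move=> b1 nn0 q0 G0; rewrite /pmom.
by have [_ ->] := is_derive_Lagr_vel p q (ebasis mu) nn b1 nn0 q0 G0; rewrite sum_ebasis.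
Qed.

Lemma forceE {mu : 'I_4} {p q : 'rV[R]_4} {nn : R} :
  differentiable (Hfield H) p -> nn != 0 -> 0 < q ord0 iu -> 0 < calG H p q ->
  force b m H mu p q nn
    = momentum_scale b H p q nn / 2 * (pd (Hfield H) mu p * q ord0 iu ^+ 2).
Proof.
move=> dH nn0 q0 G0; rewrite /force.
by have [_ ->] := is_derive_Lagr_pos p q (ebasis mu) nn dH nn0 q0 G0.
Qed.

Lemma dLdnE (p q : 'rV[R]_4) (nn : R) : nn != 0 ->
  dLdn b m H p q nn
    = q ord0 iu `^ (2 * b) * calG H p q `^ (1 - b) / (2 * nn ^+ 2) - m ^+ 2 / 2.
Proof.
move=> nn0; rewrite /dLdn derive1E.
have n2 : 2 * nn != 0 by rewrite mulf_neq0 // pnatr_eq0.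
suff D : is_derive nn (1 : R) (fun t => Lagr b m H p q t)
    (q ord0 iu `^ (2 * b) * calG H p q `^ (1 - b) / (2 * nn ^+ 2) - m ^+ 2 / 2).
  by rewrite derive_val.
apply: is_derive_eq (is_derive1_sub (is_derive1_mul (is_derive1_mul (is_derive1_opp
    (is_derive1_mul (is_derive_cst (1 : R) nn (1 : R)) (is_derive1_inv n2
      (is_derive1_mul (is_derive_cst (2 : R) nn (1 : R)) (is_derive_id nn (1 : R))))))
  (is_derive_cst (q ord0 iu `^ (2 * b)) nn (1 : R)))
  (is_derive_cst (calG H p q `^ (1 - b)) nn (1 : R)))
  (is_derive1_mul (is_derive_cst (m ^+ 2 / 2) nn (1 : R)) (is_derive_id nn (1 : R)))) _.
by rewrite /cst; field.
Qed.

End Lagrangian.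

Section LieDerivative.
Context {R : realType}.

Lemma qform_scale (a : R) (A : 'I_4 -> 'I_4 -> R) q :
  qform (fun i j => a * A i j) q = a * qform A q.
Proof.
rewrite /qform mulr_sumr; apply: eq_bigr => i _.
by rewrite mulr_sumr; apply: eq_bigr => j _; ring.
Qed.

Lemma qform_lieD (Y : 'rV[R]_4 -> 'rV[R]_4) (T : 'rV[R]_4 -> 'M[R]_4) (p q : 'rV[R]_4) :
  (forall i j, T p i j = T p j i) ->
  qform (lieD Y T p) q =
    \sum_(k < 4) Y p ord0 k * qform (fun i j => pd (fun z => T z i j) k p) q
    + 2 * \sum_(k < 4) (\sum_(r < 4) q ord0 r * pd (fun z => Y z ord0 k) r p)
                     * \sum_(j < 4) T p k j * q ord0 j.
Proof.
move=> Tsym.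
have transport k : \sum_(i < 4) \sum_(j < 4)
      T p k j * pd (fun z => Y z ord0 k) i p * q ord0 i * q ord0 j
    = (\sum_(r < 4) q ord0 r * pd (fun z => Y z ord0 k) r p)
      * \sum_(j < 4) T p k j * q ord0 j.
  rewrite mulr_suml; apply: eq_bigr => i _.
  by rewrite mulr_sumr; apply: eq_bigr => j _; ring.
have transport' k : \sum_(i < 4) \sum_(j < 4)
      T p i k * pd (fun z => Y z ord0 k) j p * q ord0 i * q ord0 j
    = \sum_(i < 4) \sum_(j < 4)
      T p k j * pd (fun z => Y z ord0 k) i p * q ord0 i * q ord0 j.
  rewrite exchange_big; apply: eq_bigr => j _; apply: eq_bigr => i _.
  by rewrite Tsym; ring.
rewrite /qform /lieD mulr_sumr -big_split /=.
under eq_bigr => i _ do under eq_bigr => j _ do rewrite !mulr_suml.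
under eq_bigr => i _ do rewrite exchange_big.
rewrite exchange_big; apply: eq_bigr => k _.
rewrite mulr_natl mulr2n -transport -{2}(transport' k) mulr_sumr -!big_split.
apply: eq_bigr => i _.
by rewrite mulr_sumr -!big_split; apply: eq_bigr => j _ /=; ring.
Qed.
End LieDerivative.

Section CurveChainRule.
Context {R : realType}.

Lemma deriveE_pd (f : 'rV[R]_4 -> R) (p v : 'rV[R]_4) : differentiable f p ->
  'D_v f p = \sum_(k < 4) v ord0 k * pd f k p.
Proof.
move=> df; rewrite deriveE // {1}(row_sum_delta v) linear_sum.
by apply: eq_bigr => k _; rewrite linearZ /pd deriveE.
Qed.

Lemma is_derive_along_curve (f : 'rV[R]_4 -> R) (x : R -> 'rV[R]_4) (l : R) :
  differentiable f (x l) -> derivable x l 1 ->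
  is_derive l (1 : R) (fun s => f (x s)) (\sum_(r < 4) derive1 x l ord0 r * pd f r (x l)).
Proof.
move=> df dx.
have dx' : differentiable x l by apply/derivable1_diffP.
have dfx : differentiable (f \o x) l by apply: differentiable_comp.
have := derivableP (diff_derivable (v := (1 : R)) dfx).
rewrite (deriveE _ dfx) diff_comp // /= -deriveE // -(deriveE _ dx') -derive1E.
by rewrite deriveE_pd.
Qed.
End CurveChainRule.

Lemma Mb2_momentum {R : realType} {b m qu G nn : R} :
  0 < b -> b < 1 -> 0 < qu -> 0 < G -> nn != 0 ->
  m ^+ 2 * nn ^+ 2 = qu `^ (2 * b) * G `^ (1 - b) ->
  Mb2 b m ((1 - b) * qu `^ (1 + 2 * b) * G `^ (- b) / nn) = G / qu ^+ 2.
Proof.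
move=> b0 b1 q0 G0 nn0 einbein; rewrite /Mb2.
have P1 : 0 < qu `^ (1 + 2 * b) by apply: powR_gt0.
have P2 : 0 < G `^ (- b) by apply: powR_gt0.
have P3 : 0 < qu `^ (2 * b) by apply: powR_gt0.
have P4 : 0 < G `^ (1 - b) by apply: powR_gt0.
have -> : (1 - b) ^+ 2 * m ^+ 2 / ((1 - b) * qu `^ (1 + 2 * b) * G `^ (- b) / nn) ^+ 2
    = m ^+ 2 * nn ^+ 2 / (qu `^ (1 + 2 * b) * G `^ (- b)) ^+ 2.
  by field; rewrite nn0 !gt_eqF ?subr_gt0.
rewrite einbein.
set X := qu `^ (2 * b) * G `^ (1 - b) / _.
have X0 : 0 < X by rewrite /X divr_gt0 ?mulr_gt0 ?exprn_gt0 ?mulr_gt0.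
(* [X = (G / qu^2)^(1 + b)], read off on logarithms. *)
have lnX : ln X = (1 + b) * (ln G - 2 * ln qu).
  rewrite /X lnM ?posrE ?mulr_gt0 ?invr_gt0 ?exprn_gt0 ?mulr_gt0 //.
  rewrite lnV ?posrE ?exprn_gt0 ?mulr_gt0 // lnM ?posrE // lnXn ?mulr_gt0 //.
  rewrite lnM ?posrE // !ln_powR; ring.
rewrite /powR gt_eqF // lnX mulrA mul1r mulVf ?mul1r; last by rewrite gt_eqF // addr_gt0.
by rewrite expRB expRM_natl !lnK ?posrE.
Qed.

Section EulerLagrangeSolution.
Context {R : realType}.
Context {H : R -> R -> R -> R} {b m : R} {I : set R} {x : R -> 'rV[R]_4} {n : R -> R}.
Hypotheses (b1 : b < 1) (dH : forall p, differentiable (Hfield H) p) (iI : is_interval I)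
  (sol : EL_solution b m H I x n) (npos : forall l, I l -> 0 < n l)
  (qpos : forall l, I l -> 0 < derive1 x l ord0 iu)
  (Gpos : forall l, I l -> 0 < calG H (x l) (derive1 x l)).

Local Notation xd l := (derive1 x l).

Let b_neq1 : b != 1. Proof. by rewrite lt_eqF. Qed.
Let n_neq0 l : I l -> n l != 0. Proof. by move=> Il; rewrite gt_eqF ?npos. Qed.

Lemma pmom_v_solution l : I l ->
  pmom b m H iv (x l) (xd l) (n l)
  = (1 - b) * xd l ord0 iu `^ (1 + 2 * b) * calG H (x l) (xd l) `^ (- b) / n l.
Proof.
move=> Il; have q0 := qpos l Il; have G0 := Gpos l Il; have n0 := n_neq0 l Il.
rewrite pmomE // big_ord4 !mxE /= /momentum_scale.
rewrite powRD ?powRr1 ?ltW //; last by apply/implyP => _; rewrite gt_eqF.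
ring.
Qed.

Lemma pmom_v_cst s t : I s -> I t ->
  pmom b m H iv (x s) (xd s) (n s) = pmom b m H iv (x t) (xd t) (n t).
Proof.
move: s t; apply: (is_derive0_interval_cst (fun s => pmom b m H iv (x s) (xd s) (n s)) iI) => l Il.
have q0 := qpos l Il; have G0 := Gpos l Il; have n0 := n_neq0 l Il.
have := sol.2.1 l Il iv.
by rewrite (forceE _ _ _ (dH _) n0 q0 G0) pd_Hfield_v mul0r mulr0.
Qed.

Lemma einbein_constraint l : I l ->
  m ^+ 2 * n l ^+ 2 = xd l ord0 iu `^ (2 * b) * calG H (x l) (xd l) `^ (1 - b).
Proof.
move=> Il; have n0 := n_neq0 l Il.
have := sol.2.2 l Il; rewrite dLdnE // => stationary.
apply/eqP; rewrite -subr_eq0; apply/eqP.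
rewrite -[RHS](mulr0 (- (2 * n l ^+ 2))) -stationary.
by field.
Qed.

Lemma Mb2_solution (b0 : 0 < b) l : I l ->
  Mb2 b m (pmom b m H iv (x l) (xd l) (n l)) = Mb2_at H (x l) (xd l).
Proof.
move=> Il; rewrite pmom_v_solution //.
exact: Mb2_momentum b0 b1 (qpos l Il) (Gpos l Il) (n_neq0 l Il) (einbein_constraint l Il).
Qed.

Lemma noether_charge_cst (M : R) (Y : 'rV[R]_4 -> 'rV[R]_4) (Om : 'rV[R]_4 -> R) :
  (forall l, I l -> Mb2_at H (x l) (xd l) = M) ->
  (forall p, differentiable Y p) ->
  (forall p i j, lieD Y (ppshift H (b / (1 - b) * M)) p i j
                 = 2 * Om p * (ppmetric H p + M *: Kmat) i j) ->
  forall s t, I s -> I t ->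
    \sum_(mu < 4) Y (x s) ord0 mu * pmom b m H mu (x s) (xd s) (n s)
    = \sum_(mu < 4) Y (x t) ord0 mu * pmom b m H mu (x t) (xd t) (n t).
Proof.
move=> MbE dY Lie; apply: (is_derive0_interval_cst
  (fun s => \sum_(mu < 4) Y (x s) ord0 mu * pmom b m H mu (x s) (xd s) (n s)) iI) => l Il.
have q0 := qpos l Il; have G0 := Gpos l Il; have n0 := n_neq0 l Il.
set q := xd l; set P := x l; set K := momentum_scale b H P q (n l).
have dYk k : is_derive l (1 : R) (fun s => Y (x s) ord0 k)
    (\sum_(r < 4) q ord0 r * pd (fun z => Y z ord0 k) r P).
  apply: is_derive_along_curve (sol.1 l Il).
  exact: differentiable_comp (dY _) (differentiable_coord _ _ _).
apply: is_derive_eq (is_derive1_sum (fun k => is_derive1_mul (dYk k) (sol.2.1 l Il k))) _.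
have lieq : qform (lieD Y (ppshift H (b / (1 - b) * M)) P) q
    = 2 * Om P * (- calG H P q + M * q ord0 iu ^+ 2).
  have -> : lieD Y (ppshift H (b / (1 - b) * M)) P
      = fun i j => 2 * Om P * (ppmetric H P + M *: Kmat) i j.
    by apply/funext => i; apply/funext => j; rewrite Lie.
  by rewrite qform_scale qform_ppmetric_Kmat.
have Mq : M * q ord0 iu ^+ 2 = calG H P q.
  by rewrite -(MbE l Il) /Mb2_at divfK // expf_neq0 // gt_eqF.
have contracted : \sum_(k < 4) Y P ord0 k * (pd (Hfield H) k P * q ord0 iu ^+ 2)
    + 2 * \sum_(k < 4) (\sum_(r < 4) q ord0 r * pd (fun z => Y z ord0 k) r P)
                     * \sum_(j < 4) ppshift H (b / (1 - b) * M) P k j * q ord0 j = 0.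
  transitivity (2 * Om P * (- calG H P q + M * q ord0 iu ^+ 2));
    last by rewrite Mq addNr mulr0.
  rewrite -lieq qform_lieD; last exact: ppshift_sym.
  congr (_ + _); apply: eq_bigr => k _; congr (_ * _).
  exact/esym/qform_pd_ppshift.
rewrite -[RHS](mulr0 (K / 2)) -[X in _ = _ * X]contracted mulrDr !mulr_sumr -big_split /=.
apply: eq_bigr => k _.
rewrite (forceE _ _ _ (dH _) n0 q0 G0) pmomE // -/q -/P -/K MbE //.
by field.
Qed.

End EulerLagrangeSolution.

Theorem mainTheorem7 (R : realType) (H : R -> R -> R -> R) (b m : R)
  (I : set R) (x : R -> 'rV[R]_4) (n : R -> R) :
  0 < b -> b < 1 -> 0 < m ->
  (forall p : 'rV[R]_4,
     differentiable (fun q : 'rV[R]_4 => H (q ord0 iu) (q ord0 i1) (q ord0 i2)) p) ->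
  open I -> is_interval I ->
  EL_solution b m H I x n ->
  (forall l, I l -> 0 < n l) ->
  (forall l, I l -> 0 < derive1 x l ord0 iu) ->
  (forall l, I l -> 0 < calG H (x l) (derive1 x l)) ->
  exists piv : R, 0 < piv /\
    (forall l, I l ->
       pmom b m H iv (x l) (derive1 x l) (n l)
         = (1 - b) * (derive1 x l ord0 iu `^ (1 + 2 * b))
             * (calG H (x l) (derive1 x l) `^ (- b)) / n l
       /\ pmom b m H iv (x l) (derive1 x l) (n l) = piv
       /\ calG H (x l) (derive1 x l) / (derive1 x l ord0 iu) ^+ 2 = Mb2 b m piv) /\
    (forall (Y : 'rV[R]_4 -> 'rV[R]_4) (Om : 'rV[R]_4 -> R),
       (forall p, differentiable Y p) ->
       (forall p i j,
          lieD Y (fun q => ppmetric H q - (b / (1 - b) * Mb2 b m piv) *: Kmat) p i j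
            = 2 * Om p * (ppmetric H p + Mb2 b m piv *: Kmat) i j) ->
       forall s t, I s -> I t ->
         \sum_(mu < 4) Y (x s) ord0 mu * pmom b m H mu (x s) (derive1 x s) (n s)
         = \sum_(mu < 4) Y (x t) ord0 mu * pmom b m H mu (x t) (derive1 x t) (n t)).
Proof.
move=> b0 b1 _ dH _ iI sol npos qpos Gpos.
have [[l0 Il0]|noI] := pselect (exists l, I l); last first.
  by exists 1; split=> //; split=> [l Il|Y Om _ _ s t Is]; case: noI; [exists l|exists s].
set piv := pmom b m H iv (x l0) (derive1 x l0) (n l0).
have pvE := pmom_v_solution b1 npos qpos Gpos.
have pivE l : I l -> pmom b m H iv (x l) (derive1 x l) (n l) = piv.
  by move=> Il; apply: pmom_v_cst dH iI sol npos qpos Gpos _ _ Il Il0.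
have MbE l : I l -> Mb2_at H (x l) (derive1 x l) = Mb2 b m piv.
  by move=> Il; rewrite -(pivE l Il) (Mb2_solution b1 sol npos qpos Gpos b0).
exists piv; split.
  rewrite /piv pvE //; apply: divr_gt0; last exact: npos.
  by rewrite !mulr_gt0 ?subr_gt0 ?powR_gt0 ?qpos ?Gpos.
split=> [l Il|Y Om dY Lie]; first by split; [exact: pvE | split; [exact: pivE | exact: MbE]].
exact: noether_charge_cst b1 dH iI sol npos qpos Gpos _ Y Om MbE dY Lie.
Qed.
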